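(* Let $\mathcal{C}$ be a d-category. A $\mathcal{C}$-language $L$ is regular if and only if (1) the sets $\mathrm{src}(L)$ and $\mathrm{tgt}(L)$ are finite, and (2) ${}_UL_V$ is regular for all $U\in\mathrm{src}(L)$ and $V\in\mathrm{tgt}(L)$.
   Context: A d-category is a small category $\mathcal{C}$ with wide subcategories $\mathcal{C}^+$ (formorphisms) and $\mathcal{C}^-$ (backmorphisms) such that an invertible $\varphi$ is in $\mathcal{C}^+$ iff $\varphi^{-1}\in\mathcal{C}^-$. A $\mathcal{C}$-automaton is a presheaf $X:\mathcal{C}^{op}\to\mathbf{Set}$ with sets of start and accept elements (elements are pairs $(U,x)$, $x\in X[U]$); morphisms preserve them. A linear category is a bipointed d-category isomorphic to a finite (possibly empty) concatenation (gluing $\top$ to $\bot$) of $\mathbf S$ (formorphism $\bot\to\top$), $\mathbf T$ (backmorphism $\top\to\bot$), $\mathbf I$ (inverse pair); a path is a d-functor $\omega:\mathcal I\to\mathcal{C}$ from one; its track object is $\operatorname{colim}_i\mathcal{C}(-,\omega(i))$ with single start element image of $\mathrm{id}_{\omega(\bot)}$ (lying over $\mathrm{src}=\omega(\bot)$) and single accept element image of $\mathrm{id}_{\omega(\top)}$ (over $\mathrm{tgt}=\omega(\top)$); track objects are automata isomorphic to such. $\Delta\sqsubseteq\Gamma$ if there is an automaton morphism $\Delta\to\Gamma$. A $\mathcal{C}$-language is a class of track objects down-closed under $\sqsubseteq$. $\mathrm{Lang}(X)$ is the class of track objects admitting an automaton morphism to $X$. A presheaf $X$ is finitely generated if $X\cong\operatorname{colim}_{e\in\mathcal{E}}\mathcal{C}(-,G(e))$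 for some finite category $\mathcal{E}$ and functor $G:\mathcal{E}\to\mathcal{C}$; an automaton has finite type if its presheaf is finitely generated and it has finitely many start and accept elements. $L$ is regular if $L=\mathrm{Lang}(X)$ for some finite-type automaton $X$. $\mathrm{src}(L)=\{\mathrm{src}\Gamma\mid\Gamma\in L\}$, $\mathrm{tgt}(L)=\{\mathrm{tgt}\Gamma\mid\Gamma\in L\}$, ${}_UL_V=\{\Gamma\in L\mid\mathrm{src}\Gamma=U,\mathrm{tgt}\Gamma=V\}$. *)

From Stdlib Require Import List Relations.

Record Category := {
  ob : Type;
  hom : ob -> ob -> Type;
  idm : forall a, hom a a;
  comp : forall x y z, hom y z -> hom x y -> hom x z;
  comp_id_l : forall a b (f : hom a b), comp a b b (idm b) f = f;
  comp_id_r : forall a b (f : hom a b), comp a a b f (idm a) = f;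
  comp_assoc : forall a b c d (f : hom a b) (g : hom b c) (h : hom c d),
      comp a c d h (comp a b c g f) = comp a b d (comp b c d h g) f }.
Arguments hom {_} _ _.
Arguments idm {_} _.
Arguments comp {_ x y z} _ _.

Record dCategory := {
  dcat :> Category;
  fwd : forall a b : ob dcat, hom a b -> Prop;
  bwd : forall a b : ob dcat, hom a b -> Prop;
  fwd_id : forall a, fwd a a (idm a);
  fwd_comp : forall a b c (f : hom a b) (g : hom b c),
      fwd a b f -> fwd b c g -> fwd a c (comp g f);
  bwd_id : forall a, bwd a a (idm a);
  bwd_comp : forall a b c (f : hom a b) (g : hom b c),
      bwd a b f -> bwd b c g -> bwd a c (comp g f);
  inv_ax : forall a b (f : hom a b) (g : hom b a),
      comp g f = idm a -> comp f g = idm b -> (fwd a b f <-> bwd b a g) }.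
Arguments fwd {d a b} _.
Arguments bwd {d a b} _.

Record Functor (E D : Category) := {
  fobj : ob E -> ob D;
  fmap : forall a b, @hom E a b -> @hom D (fobj a) (fobj b);
  fmap_id : forall a, fmap a a (idm a) = idm (fobj a);
  fmap_comp : forall a b c (f : @hom E a b) (g : @hom E b c),
      fmap a c (comp g f) = comp (fmap b c g) (fmap a b f) }.
Arguments fobj {E D} _ _.
Arguments fmap {E D} _ {a b} _.

Definition Finite (T : Type) : Prop := exists l : list T, forall x, In x l.
Definition FiniteSet {T : Type} (P : T -> Prop) : Prop :=
  exists l : list T, forall x, P x -> In x l.
Definition FiniteCategory (E : Category) : Prop :=
  Finite (ob E) /\ forall a b : ob E, Finite (@hom E a b).

Section Automata.
Context (C : dCategory).

(* presheaves C^op -> Set (data; laws in is_presheaf) *)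
Record PSh := {
  psh :> ob C -> Type;
  act : forall U V : ob C, hom U V -> psh V -> psh U }.
Arguments act _ {U V} _ _.

Definition is_presheaf (X : PSh) : Prop :=
  (forall U (x : X U), act X (idm U) x = x) /\
  (forall U V W (f : hom U V) (g : hom V W) (x : X W),
      act X (comp g f) x = act X f (act X g x)).

Record Automaton := {
  apsh :> PSh;
  start : forall U : ob C, apsh U -> Prop;
  accept : forall U : ob C, apsh U -> Prop }.

Definition amorphism (D G : Automaton) (f : forall U, D U -> G U) : Prop :=
  (forall U V (h : hom U V) (x : D V), f U (act D h x) = act G h (f V x)) /\
  (forall U x, start D U x -> start G U (f U x)) /\
  (forall U x, accept D U x -> accept G U (f U x)).
Definition sqle (D G : Automaton) : Prop :=
  exists f : forall U, D U -> G U, amorphism D G f.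

(* X is (isomorphic to) the colimit of the representables C(-, obj j), j valid,
   along the cocone xi (by Yoneda, xi j is the image of id_{obj j}), where the
   diagram is generated by the relation gen: the canonical map
   (j, f) |-> X(f)(xi j) is surjective and its kernel is the equivalence
   relation generated by gen. *)
Definition rep_colim (X : PSh) (J : Type) (valid : J -> Prop) (obj : J -> ob C)
  (gen : forall U, {j : J & hom U (obj j)} -> {j : J & hom U (obj j)} -> Prop)
  (xi : forall j, X (obj j)) : Prop :=
  (forall U (x : X U), exists j (f : hom U (obj j)), valid j /\ x = act X f (xi j)) /\
  (forall U (a b : {j : J & hom U (obj j)}), valid (projT1 a) -> valid (projT1 b) ->
     (act X (projT2 a) (xi (projT1 a)) = act X (projT2 b) (xi (projT1 b))
        <-> clos_refl_sym_trans _ (gen U) a b)).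

(* image of one generator S (formorphism), T (backmorphism) or I (inverse pair
   phi formorphism, psi = phi^-1 backmorphism) of a linear category *)
Inductive Step (A B : ob C) : Type :=
| StepS (phi : hom A B) : fwd phi -> Step A B
| StepT (psi : hom B A) : bwd psi -> Step A B
| StepI (phi : hom A B) (psi : hom B A) :
    comp psi phi = idm A -> comp phi psi = idm B -> fwd phi -> bwd psi -> Step A B.

(* a path = d-functor from the linear category with objects 0 (= bot), ..., plen (= top) *)
Record Path := {
  plen : nat;
  pob : nat -> ob C;
  pstep : forall k, k < plen -> Step (pob k) (pob (S k)) }.

Definition step_rel {U A B : ob C} (s : Step A B) (f : hom U A) (f' : hom U B) : Prop :=
  match s with
  | StepS _ _ phi _ => f' = comp phi f
  | StepT _ _ psi _ => f = comp psi f'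
  | StepI _ _ phi psi _ _ _ _ => f' = comp phi f \/ f = comp psi f'
  end.

Inductive path_gen (p : Path) (U : ob C) :
  {k : nat & hom U (pob p k)} -> {k : nat & hom U (pob p k)} -> Prop :=
| pg_step (k : nat) (H : k < plen p) (f : hom U (pob p k)) (f' : hom U (pob p (S k))) :
    step_rel (pstep p k H) f f' ->
    path_gen p U (existT (fun k => hom U (pob p k)) k f)
                 (existT (fun k => hom U (pob p k)) (S k) f').

Definition is_track_of (G : Automaton) (p : Path) : Prop :=
  is_presheaf G /\
  exists delta : forall k, G (pob p k),
    rep_colim G nat (fun k => k <= plen p) (pob p) (path_gen p) delta /\
    (forall U (x : G U), start G U x <->
        existT (fun V => G V) U x = existT (fun V => G V) (pob p 0) (act G (idm _) (delta 0))) /\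
    (forall U (x : G U), accept G U x <->
        existT (fun V => G V) U x =
        existT (fun V => G V) (pob p (plen p)) (act G (idm _) (delta (plen p)))).

Definition is_track (G : Automaton) : Prop := exists p : Path, is_track_of G p.

Definition is_language (L : Automaton -> Prop) : Prop :=
  (forall G, L G -> is_track G) /\
  (forall D G, is_track D -> sqle D G -> L G -> L D).

Definition Lang (X : Automaton) : Automaton -> Prop :=
  fun G => is_track G /\ sqle G X.

Definition fin_generated (X : PSh) : Prop :=
  exists (E : Category) (F : Functor E C), FiniteCategory E /\
  exists xi : forall e, X (fobj F e),
    rep_colim X (ob E) (fun _ => True) (fobj F)
      (fun U a b => exists alpha : @hom E (projT1 a) (projT1 b),
                      projT2 b = comp (fmap F alpha) (projT2 a)) xi.

Definition finite_type (X : Automaton) : Prop :=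
  is_presheaf X /\ fin_generated X /\
  FiniteSet (fun e : {U : ob C & X U} => start X (projT1 e) (projT2 e)) /\
  FiniteSet (fun e : {U : ob C & X U} => accept X (projT1 e) (projT2 e)).

Definition regular (L : Automaton -> Prop) : Prop :=
  exists X : Automaton, finite_type X /\ forall G, L G <-> Lang X G.

Definition src_set (L : Automaton -> Prop) (U : ob C) : Prop :=
  exists G, L G /\ exists x : G U, start G U x.
Definition tgt_set (L : Automaton -> Prop) (V : ob C) : Prop :=
  exists G, L G /\ exists y : G V, accept G V y.
Definition sub_lang (L : Automaton -> Prop) (U V : ob C) : Automaton -> Prop :=
  fun G => L G /\ (exists x : G U, start G U x) /\ (exists y : G V, accept G V y).

End Automata.

(* If X is a finite-type automaton with Lang X = L, every track in L maps its
   start and accept elements to the finitely many start and accept elements of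
   X, so src(L) and tgt(L) are finite; keeping only the start elements of X over
   U and the accept elements over V gives an automaton recognising _U L_V.
   Conversely L is the finite union of the _U L_V, and regular languages are
   closed under finite unions: Lang of a coproduct of automata is the union of
   the Langs, because a track is connected and hence a morphism out of it lands
   in a single summand. *)
From Stdlib Require Import List Relations Classical.

Lemma FiniteSet_sub {T : Type} (P Q : T -> Prop) :
  (forall x, Q x -> P x) -> FiniteSet P -> FiniteSet Q.
Proof. intros HQP [l Hl]; exists l; auto. Qed.

Lemma FiniteSet_image {A B : Type} (g : A -> B) (P : A -> Prop) (Q : B -> Prop) :
  (forall y, Q y -> exists x, P x /\ y = g x) -> FiniteSet P -> FiniteSet Q.
Proof.
  intros Himg [l Hl]; exists (map g l); intros y Hy.
  destruct (Himg y Hy) as [x [Hx ->]]; apply in_map, Hl, Hx.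
Qed.

Lemma FiniteSet_sum {A B : Type} (P : A -> Prop) (Q : B -> Prop) :
  FiniteSet P -> FiniteSet Q ->
  FiniteSet (fun s : A + B => match s with inl a => P a | inr b => Q b end).
Proof.
  intros [la Ha] [lb Hb]; exists (map inl la ++ map inr lb).
  intros [a|b] H; apply in_or_app; [left|right]; apply in_map; auto.
Qed.

Lemma clos_rst_map {A B : Type} (R : relation A) (R' : relation B) (g : A -> B) :
  (forall x y, R x y -> R' (g x) (g y)) ->
  forall x y, clos_refl_sym_trans _ R x y -> clos_refl_sym_trans _ R' (g x) (g y).
Proof.
  intros Hg x y H; induction H; eauto using clos_refl_sym_trans.
Qed.

Section Tracks.
Context (C : dCategory).

Lemma step_rel_inhabited (A B : ob C) (s : Step C A B) :
  exists U (f : hom U A) (f' : hom U B), step_rel C s f f'.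
Proof.
  destruct s as [phi | psi | phi psi]; simpl.
  - exists A, (idm A), phi; now rewrite comp_id_r.
  - exists B, psi, (idm B); now rewrite comp_id_r.
  - exists A, (idm A), phi; left; now rewrite comp_id_r.
Qed.

(* Consecutive generators of a track are glued along some step of the path,
   so an invariant boolean label cannot change along the path. *)
Lemma track_invariant_const (G : Automaton C) (p : Path C)
    (label : forall U, G U -> bool) :
  is_track_of C G p ->
  (forall U V h x, label U (act C G U V h x) = label V x) ->
  forall U x W y, label U x = label W y.
Proof.
  intros [_ [delta [[Hgen Hker] _]]] Hinv.
  assert (Hdelta : forall k, k <= plen C p -> label _ (delta k) = label _ (delta 0)).
  { induction k as [|k IH]; intros Hk; [reflexivity|].
    destruct (step_rel_inhabited _ _ (pstep C p k Hk)) as [U [f [f' Hrel]]].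
    assert (Heq : act C G _ _ f (delta k) = act C G _ _ f' (delta (S k))).
    { apply (Hker U (existT _ k f) (existT _ (S k) f')); simpl.
      - exact (PeanoNat.Nat.lt_le_incl _ _ Hk).
      - exact Hk.
      - exact (rst_step _ _ _ _ (pg_step C p U k Hk f f' Hrel)). }
    rewrite <- (Hinv _ _ f'), <- Heq, Hinv.
    exact (IH (PeanoNat.Nat.lt_le_incl _ _ Hk)). }
  assert (Hall : forall U x, label U x = label _ (delta 0)).
  { intros U x; destruct (Hgen U x) as [k [f [Hk ->]]].
    rewrite Hinv; auto. }
  intros; now rewrite Hall, (Hall W y).
Qed.

Lemma track_start_unique (G : Automaton C) : is_track C G ->
  exists W (x : G W), start C G W x /\ forall W' x', start C G W' x' -> W' = W.
Proof.
  intros [p [_ [delta [_ [Hstart _]]]]].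
  exists (pob C p 0), (act C G _ _ (idm _) (delta 0)); split.
  - now apply Hstart.
  - intros W' x' H; apply Hstart in H; exact (f_equal (@projT1 _ _) H).
Qed.

Lemma track_accept_unique (G : Automaton C) : is_track C G ->
  exists W (x : G W), accept C G W x /\ forall W' x', accept C G W' x' -> W' = W.
Proof.
  intros [p [_ [delta [_ [_ Haccept]]]]].
  exists (pob C p (plen C p)), (act C G _ _ (idm _) (delta (plen C p))); split.
  - now apply Haccept.
  - intros W' x' H; apply Haccept in H; exact (f_equal (@projT1 _ _) H).
Qed.

End Tracks.

Section EmptyAutomaton.
Context (C : dCategory).

Definition empty_category : Category.
Proof.
  refine {| ob := Empty_set; hom := fun _ _ => Empty_set;
            idm := fun a => match a with end;
            comp := fun x y z g f => match f with end |}; intros [].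
Defined.

Definition empty_functor : Functor empty_category (dcat C).
Proof.
  unshelve refine (Build_Functor empty_category (dcat C)
                     (fun a : Empty_set => match a with end) _ _ _); intros [].
Defined.

Definition empty_automaton : Automaton C :=
  {| apsh := {| psh := fun _ => Empty_set; act := fun U V h x => x |};
     start := fun _ _ => False; accept := fun _ _ => False |}.

Lemma empty_automaton_finite_type : finite_type C empty_automaton.
Proof.
  split; [|split; [|split]].
  - split; intros; simpl in *; contradiction.
  - exists empty_category, empty_functor; split.
    + split; [exists nil|]; intros [].
    + unshelve eexists; [intros []|]; split; [intros ? [] | intros ? [[]]].
  - exists nil; intros ? [].
  - exists nil; intros ? [].
Qed.

Lemma Lang_empty_automaton (G : Automaton C) : ~ Lang C empty_automaton G.
Proof.
  intros [Ht [f _]]; destruct (track_start_unique C G Ht) as [W [x _]].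
  destruct (f W x).
Qed.

End EmptyAutomaton.

Section SumCategory.
Context (C : dCategory) (D1 D2 : Category).

Definition sum_hom (a b : ob D1 + ob D2) : Type :=
  match a, b with
  | inl a, inl b => @hom D1 a b
  | inr a, inr b => @hom D2 a b
  | _, _ => Empty_set
  end.

Definition sum_idm (a : ob D1 + ob D2) : sum_hom a a :=
  match a with inl a => idm a | inr a => idm a end.

Definition sum_comp (x y z : ob D1 + ob D2) : sum_hom y z -> sum_hom x y -> sum_hom x z.
Proof.
  destruct x, y, z; simpl; intros g f;
    first [exact (comp g f) | destruct g | destruct f].
Defined.

Definition sum_category : Category.
Proof.
  refine {| ob := ob D1 + ob D2; hom := sum_hom; idm := sum_idm; comp := sum_comp |}.
  - intros [a|a] [b|b] f; simpl in *; try destruct f; apply comp_id_l.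
  - intros [a|a] [b|b] f; simpl in *; try destruct f; apply comp_id_r.
  - intros [a|a] [b|b] [c|c] [d|d] f g h; simpl in *;
      try destruct f; try destruct g; try destruct h; apply comp_assoc.
Defined.

Context (F1 : Functor D1 (dcat C)) (F2 : Functor D2 (dcat C)).

Definition sum_fobj (a : ob sum_category) : ob C :=
  match a with inl a => fobj F1 a | inr a => fobj F2 a end.

Definition sum_fmap (a b : ob sum_category) :
  @hom sum_category a b -> hom (sum_fobj a) (sum_fobj b).
Proof.
  destruct a, b; simpl; intros f;
    first [exact (fmap F1 f) | exact (fmap F2 f) | destruct f].
Defined.

Definition sum_functor : Functor sum_category (dcat C).
Proof.
  refine (Build_Functor sum_category (dcat C) sum_fobj sum_fmap _ _).
  - intros [a|a]; apply fmap_id.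
  - intros [a|a] [b|b] [c|c] f g; simpl in *;
      try destruct f; try destruct g; apply fmap_comp.
Defined.

End SumCategory.

Section SumAutomaton.
Context (C : dCategory).

Definition sum_psh (X Y : PSh C) : PSh C :=
  {| psh := fun U => (X U + Y U)%type;
     act := fun U V h s => match s with
                           | inl x => inl (act C X U V h x)
                           | inr y => inr (act C Y U V h y) end |}.

Definition sum_automaton (X Y : Automaton C) : Automaton C :=
  {| apsh := sum_psh X Y;
     start := fun U s => match s with inl x => start C X U x | inr y => start C Y U y end;
     accept := fun U s => match s with inl x => accept C X U x | inr y => accept C Y U y end |}.

(* The generators of X + Y are those of X and of Y; the relations identifying
   them never mix the two summands. *)
Lemma sum_psh_fin_generated (X Y : PSh C) :
  fin_generated C X -> fin_generated C Y -> fin_generated C (sum_psh X Y).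
Proof.
  intros [E1 [F1 [[[l1 Hob1] Hhom1] [xi1 [Hgen1 Hker1]]]]]
         [E2 [F2 [[[l2 Hob2] Hhom2] [xi2 [Hgen2 Hker2]]]]].
  exists (sum_category E1 E2), (sum_functor C E1 E2 F1 F2); split.
  - split.
    + exists (map inl l1 ++ map inr l2).
      intros [a|a]; apply in_or_app; [left|right]; apply in_map; auto.
    + intros [a|a] [b|b]; simpl; first [apply Hhom1 | apply Hhom2 | exists nil; intros []].
  - unshelve eexists.
    { intros [e|e]; [exact (inl (xi1 e)) | exact (inr (xi2 e))]. }
    split.
    + intros U [x|x].
      * destruct (Hgen1 U x) as [e [f [_ ->]]]; now exists (inl e), f.
      * destruct (Hgen2 U x) as [e [f [_ ->]]]; now exists (inr e), f.
    + intros U a b _ _; split.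
      * destruct a as [[a|a] fa], b as [[b|b] fb]; simpl; intros E;
          try discriminate E; injection E as E.
        -- apply (Hker1 U (existT _ a fa) (existT _ b fb) I I) in E.
           refine (clos_rst_map _ _ (fun q => existT (fun j => hom U (sum_fobj C E1 E2 F1 F2 j))
                                              (inl (projT1 q)) (projT2 q)) _ _ _ E).
           intros [x fx] [y fy] [alpha Ha]; now exists alpha.
        -- apply (Hker2 U (existT _ a fa) (existT _ b fb) I I) in E.
           refine (clos_rst_map _ _ (fun q => existT (fun j => hom U (sum_fobj C E1 E2 F1 F2 j))
                                              (inr (projT1 q)) (projT2 q)) _ _ _ E).
           intros [x fx] [y fy] [alpha Ha]; now exists alpha.
      * intros H; induction H as [a b H| | |]; [|reflexivity|now symmetry|etransitivity; eauto].
        destruct a as [[a|a] fa], b as [[b|b] fb]; destruct H as [alpha Ha];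
          simpl in alpha; try destruct alpha; simpl; f_equal.
        -- apply (Hker1 U (existT _ a fa) (existT _ b fb) I I), rst_step; now exists alpha.
        -- apply (Hker2 U (existT _ a fa) (existT _ b fb) I I), rst_step; now exists alpha.
Qed.

Lemma FiniteSet_sum_elements (X Y : Automaton C)
    (P : forall U, X U -> Prop) (Q : forall U, Y U -> Prop) :
  FiniteSet (fun e : {U : ob C & X U} => P (projT1 e) (projT2 e)) ->
  FiniteSet (fun e : {U : ob C & Y U} => Q (projT1 e) (projT2 e)) ->
  FiniteSet (fun e : {U : ob C & sum_automaton X Y U} =>
     match projT2 e with inl x => P _ x | inr y => Q _ y end).
Proof.
  intros HP HQ.
  refine (FiniteSet_image
            (fun s => match s with
                      | inl e => existT (fun U => sum_automaton X Y U) (projT1 e) (inl (projT2 e))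
                      | inr e => existT (fun U => sum_automaton X Y U) (projT1 e) (inr (projT2 e))
                      end) _ _ _ (FiniteSet_sum _ _ HP HQ)).
  intros [U [x|y]] H; [exists (inl (existT _ U x)) | exists (inr (existT _ U y))]; auto.
Qed.

Lemma sum_automaton_finite_type (X Y : Automaton C) :
  finite_type C X -> finite_type C Y -> finite_type C (sum_automaton X Y).
Proof.
  intros [[HXid HXcomp] [HXfg [HXs HXa]]] [[HYid HYcomp] [HYfg [HYs HYa]]].
  split; [|split; [|split]].
  - split; [intros U [x|x] | intros U V W f g [x|x]]; simpl; f_equal; auto.
  - now apply sum_psh_fin_generated.
  - exact (FiniteSet_sum_elements X Y _ _ HXs HYs).
  - exact (FiniteSet_sum_elements X Y _ _ HXa HYa).
Qed.

Definition is_inl {A B : Type} (s : A + B) : bool :=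
  match s with inl _ => true | inr _ => false end.

Definition proj_inl {A B : Type} (s : A + B) : is_inl s = true -> A :=
  match s as s0 return is_inl s0 = true -> A with
  | inl a => fun _ => a
  | inr _ => fun H => match Bool.diff_false_true H with end
  end.

Definition proj_inr {A B : Type} (s : A + B) : is_inl s = false -> B :=
  match s as s0 return is_inl s0 = false -> B with
  | inl _ => fun H => match Bool.diff_true_false H with end
  | inr b => fun _ => b
  end.

Lemma inl_proj_inl {A B : Type} (s : A + B) H : inl (proj_inl s H) = s.
Proof. destruct s; [reflexivity | discriminate H]. Qed.

Lemma inr_proj_inr {A B : Type} (s : A + B) H : inr (proj_inr s H) = s.
Proof. destruct s; [discriminate H | reflexivity]. Qed.

Lemma sqle_sum_left (G X Y : Automaton C) (f : forall U, G U -> sum_automaton X Y U)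
    (Hl : forall U x, is_inl (f U x) = true) :
  amorphism C G (sum_automaton X Y) f -> sqle C G X.
Proof.
  intros [Hnat [Hs Ha]]; exists (fun U x => proj_inl (f U x) (Hl U x)).
  split; [|split]; intros U.
  - intros V h x; enough (E : inl (B := Y U) (proj_inl (f U (act C G U V h x)) (Hl U _)) =
                               inl (act C X U V h (proj_inl (f V x) (Hl V x))))
      by (injection E; auto).
    rewrite (inl_proj_inl (f U _)), Hnat.
    rewrite <- (inl_proj_inl (f V x) (Hl V x)) at 1; reflexivity.
  - intros x Hx; specialize (Hs U x Hx); rewrite <- (inl_proj_inl (f U x) (Hl U x)) in Hs; exact Hs.
  - intros x Hx; specialize (Ha U x Hx); rewrite <- (inl_proj_inl (f U x) (Hl U x)) in Ha; exact Ha.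
Qed.

Lemma sqle_sum_right (G X Y : Automaton C) (f : forall U, G U -> sum_automaton X Y U)
    (Hr : forall U x, is_inl (f U x) = false) :
  amorphism C G (sum_automaton X Y) f -> sqle C G Y.
Proof.
  intros [Hnat [Hs Ha]]; exists (fun U x => proj_inr (f U x) (Hr U x)).
  split; [|split]; intros U.
  - intros V h x; enough (E : inr (A := X U) (proj_inr (f U (act C G U V h x)) (Hr U _)) =
                               inr (act C Y U V h (proj_inr (f V x) (Hr V x))))
      by (injection E; auto).
    rewrite (inr_proj_inr (f U _)), Hnat.
    rewrite <- (inr_proj_inr (f V x) (Hr V x)) at 1; reflexivity.
  - intros x Hx; specialize (Hs U x Hx); rewrite <- (inr_proj_inr (f U x) (Hr U x)) in Hs; exact Hs.
  - intros x Hx; specialize (Ha U x Hx); rewrite <- (inr_proj_inr (f U x) (Hr U x)) in Ha; exact Ha.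
Qed.

Lemma Lang_sum_automaton (X Y G : Automaton C) :
  Lang C (sum_automaton X Y) G <-> Lang C X G \/ Lang C Y G.
Proof.
  split.
  - intros [Ht [f Hf]]; pose proof Ht as [p Hp].
    assert (Hconst : forall U x W y, is_inl (f U x) = is_inl (f W y)).
    { apply (track_invariant_const C G p (fun U x => is_inl (f U x)) Hp).
      intros U V h x; rewrite (proj1 Hf); now destruct (f V x). }
    destruct (track_start_unique C G Ht) as [W [x0 _]].
    destruct (is_inl (f W x0)) eqn:Hside; [left | right]; split; auto.
    + apply (sqle_sum_left G X Y f); auto.
      intros U x; now rewrite (Hconst U x W x0).
    + apply (sqle_sum_right G X Y f); auto.
      intros U x; now rewrite (Hconst U x W x0).
  - intros [[Ht [f [Hnat [Hs Ha]]]] | [Ht [f [Hnat [Hs Ha]]]]]; split; auto.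
    + exists (fun U x => inl (f U x)); split; [|split]; simpl; intros; auto.
      now rewrite Hnat.
    + exists (fun U x => inr (f U x)); split; [|split]; simpl; intros; auto.
      now rewrite Hnat.
Qed.

End SumAutomaton.

Section RegularLanguages.
Context (C : dCategory).

Lemma regular_ext (P Q : Automaton C -> Prop) :
  (forall G, P G <-> Q G) -> regular C P -> regular C Q.
Proof.
  intros HPQ [X [HX HXP]]; exists X; split; auto.
  intros G; rewrite <- HPQ; auto.
Qed.

Lemma regular_empty : regular C (fun _ => False).
Proof.
  exists (empty_automaton C); split; [apply empty_automaton_finite_type|].
  intros G; split; [intros [] | apply Lang_empty_automaton].
Qed.

Lemma regular_union (P Q : Automaton C -> Prop) :
  regular C P -> regular C Q -> regular C (fun G => P G \/ Q G).
Proof.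
  intros [X [HX HXP]] [Y [HY HYQ]].
  exists (sum_automaton C X Y); split; [now apply sum_automaton_finite_type|].
  intros G; rewrite Lang_sum_automaton, HXP, HYQ; reflexivity.
Qed.

Lemma regular_list_union {I : Type} (l : list I) (P : I -> Automaton C -> Prop) :
  (forall i, In i l -> regular C (P i)) ->
  regular C (fun G => exists i, In i l /\ P i G).
Proof.
  induction l as [|i l IH]; intros Hreg.
  - apply (regular_ext (fun _ => False)); [|exact regular_empty].
    intros G; split; [intros [] | intros [j [[] _]]].
  - apply (regular_ext (fun G => P i G \/ exists j, In j l /\ P j G)).
    + intros G; split.
      * intros [HG | [j [Hj HG]]]; [exists i | exists j]; simpl; auto.
      * intros [j [[<- | Hj] HG]]; [left | right; exists j]; auto.
    + apply regular_union; [apply Hreg; simpl|apply IH; intros j Hj; apply Hreg; simpl]; auto.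
Qed.

Lemma regular_guarded (P : Automaton C -> Prop) (Q : Prop) :
  (forall G, P G -> Q) -> (Q -> regular C P) -> regular C P.
Proof.
  intros HPQ Hreg; destruct (classic Q) as [HQ | HnQ]; auto.
  apply (regular_ext (fun _ => False)); [|exact regular_empty].
  intros G; split; [intros [] | intros HG; exact (HnQ (HPQ G HG))].
Qed.

Lemma regular_src_finite (L : Automaton C -> Prop) :
  regular C L -> FiniteSet (src_set C L).
Proof.
  intros [X [[_ [_ [Hstart _]]] HLX]].
  refine (FiniteSet_image (@projT1 _ _) _ _ _ Hstart).
  intros U [G [HG [x Hx]]]; destruct (proj1 (HLX G) HG) as [_ [f [_ [Hf _]]]].
  exists (existT _ U (f U x)); split; [apply Hf, Hx | reflexivity].
Qed.

Lemma regular_tgt_finite (L : Automaton C -> Prop) :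
  regular C L -> FiniteSet (tgt_set C L).
Proof.
  intros [X [[_ [_ [_ Haccept]]] HLX]].
  refine (FiniteSet_image (@projT1 _ _) _ _ _ Haccept).
  intros U [G [HG [x Hx]]]; destruct (proj1 (HLX G) HG) as [_ [f [_ [_ Hf]]]].
  exists (existT _ U (f U x)); split; [apply Hf, Hx | reflexivity].
Qed.

Definition restrict_automaton (X : Automaton C) (U V : ob C) : Automaton C :=
  {| apsh := apsh C X;
     start := fun W x => start C X W x /\ W = U;
     accept := fun W y => accept C X W y /\ W = V |}.

Lemma restrict_automaton_finite_type (X : Automaton C) (U V : ob C) :
  finite_type C X -> finite_type C (restrict_automaton X U V).
Proof.
  intros [Hpsh [Hfg [Hs Ha]]]; split; [|split; [|split]]; auto.
  - revert Hs; apply FiniteSet_sub; intros e [H _]; exact H.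
  - revert Ha; apply FiniteSet_sub; intros e [H _]; exact H.
Qed.

(* A track has exactly one start and one accept object, so restricting the
   start and accept elements of X to U and V loses no morphism out of a track
   starting at U and accepting at V. *)
Lemma Lang_restrict_automaton (X : Automaton C) (U V : ob C) (G : Automaton C) :
  Lang C (restrict_automaton X U V) G <->
  Lang C X G /\ (exists x : G U, start C G U x) /\ (exists y : G V, accept C G V y).
Proof.
  split.
  - intros [Ht [f [Hnat [Hs Ha]]]].
    destruct (track_start_unique C G Ht) as [W0 [x0 [Hx0 _]]].
    destruct (track_accept_unique C G Ht) as [W1 [x1 [Hx1 _]]].
    split; [|split].
    + split; auto; exists f; split; [|split]; auto; intros W z Hz.
      * exact (proj1 (Hs W z Hz)).
      * exact (proj1 (Ha W z Hz)).
    + destruct (proj2 (Hs _ _ Hx0)); now exists x0.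
    + destruct (proj2 (Ha _ _ Hx1)); now exists x1.
  - intros [[Ht [f [Hnat [Hs Ha]]]] [[x Hx] [y Hy]]].
    destruct (track_start_unique C G Ht) as [W0 [_ [_ Hstart]]].
    destruct (track_accept_unique C G Ht) as [W1 [_ [_ Haccept]]].
    split; auto; exists f; split; [|split]; auto; intros W z Hz; split; auto.
    + now rewrite (Hstart W z Hz), (Hstart U x Hx).
    + now rewrite (Haccept W z Hz), (Haccept V y Hy).
Qed.

Lemma regular_sub_lang (L : Automaton C -> Prop) (U V : ob C) :
  regular C L -> regular C (sub_lang C L U V).
Proof.
  intros [X [HX HLX]]; exists (restrict_automaton X U V).
  split; [now apply restrict_automaton_finite_type|].
  intros G; rewrite Lang_restrict_automaton, <- HLX; reflexivity.
Qed.

Lemma language_sub_lang_cover (L : Automaton C -> Prop) (ls lt : list (ob C)) :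
  is_language C L ->
  (forall U, src_set C L U -> In U ls) -> (forall V, tgt_set C L V -> In V lt) ->
  forall G, L G <->
    exists UV, In UV (list_prod ls lt) /\ sub_lang C L (fst UV) (snd UV) G.
Proof.
  intros [Htrack _] Hls Hlt G; split.
  - intros HG.
    destruct (track_start_unique C G (Htrack G HG)) as [U [x [Hx _]]].
    destruct (track_accept_unique C G (Htrack G HG)) as [V [y [Hy _]]].
    exists (U, V); split.
    + apply in_prod; [apply Hls | apply Hlt]; exists G; split; eauto.
    + repeat split; eauto.
  - intros [UV [_ [HG _]]]; exact HG.
Qed.

End RegularLanguages.

Theorem lemma11 (C : dCategory) (L : Automaton C -> Prop) :
  is_language C L ->
  (regular C L <->
   (FiniteSet (src_set C L) /\ FiniteSet (tgt_set C L) /\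
    forall U V, src_set C L U -> tgt_set C L V -> regular C (sub_lang C L U V))).
Proof.
  intros HL; split.
  - intros Hreg; split; [|split].
    + now apply regular_src_finite.
    + now apply regular_tgt_finite.
    + intros U V _ _; now apply regular_sub_lang.
  - intros [[ls Hls] [[lt Hlt] Hreg]].
    eapply regular_ext.
    { intros G; symmetry; exact (language_sub_lang_cover C L ls lt HL Hls Hlt G). }
    apply regular_list_union; intros [U V] _.
    apply (regular_guarded C _ (src_set C L U /\ tgt_set C L V)).
    + intros G [HG [[x Hx] [y Hy]]]; split; exists G; eauto.
    + intros [HU HV]; now apply Hreg.
Qed.
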